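(* Let $\tilde X\in\mathbb{R}^{n\times k}$, $\Gamma=\tilde X^t\tilde X$, $\alpha\in\mathbb{R}^k$, and let $\mathcal{I},\mathcal{C}$ be subsets of $\{1,\dots,k\}$. For each $\ell$ put $B(\mathcal{C})_\ell=\sum_{\ell'\in\mathcal{C},\,\ell'\neq\ell}\Gamma_{\ell\ell'}\alpha_{\ell'}$. Then $$\|B(\mathcal{C})\|_{\mathcal{I},2}^2\le 2\,\|\alpha\|_{\mathcal{C},1}^2\,r(\mathcal{I}).$$
   Context: $\mathcal{G}_1,\dots,\mathcal{G}_p$ is a partition of $\{1,\dots,k\}$ into groups with $t_j=\#\mathcal{G}_j$; each index $\ell$ is written $\ell=(j,t)$ with $j$ the group containing $\ell$ and $t\in\{1,\dots,t_j\}$ its rank inside $\mathcal{G}_j$. For $u\in\mathbb{R}^k$, $\|u\|_{\mathcal{I},1}=\sum_{\ell\in\mathcal{I}}|u_\ell|$, $\|u\|_{\mathcal{I},2}^2=\sum_{\ell\in\mathcal{I}}u_\ell^2$. $\gamma_{BT}=\sup\{|\Gamma_{(j,t)(j',t')}|: t\neq t'\}$ (over all $j,j'$ and admissible ranks), $\gamma_{BG}=\sup\{|\Gamma_{(j,t)(j',t)}|: j\ne j',\ t\le t_j\wedge t_{j'}\}$, and $r(\mathcal{I})=\#(\mathcal{I})\,\gamma_{BT}^2+\#\{j:\exists t,\ (j,t)\in\mathcal{I}\}\,\gamma_{BG}^2$. *)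

From HB Require Import structures.
From mathcomp Require Import all_boot all_order all_algebra.
Set Implicit Arguments. Unset Strict Implicit. Unset Printing Implicit Defensive.
Import Order.TTheory GRing.Theory Num.Theory.
Local Open Scope ring_scope.

(* Indices 1..k are represented by 'I_k; the partition G_1..G_p is given by the
   group map [grp : 'I_k -> 'I_p] (l belongs to G_(grp l)). *)

Definition rank_in (k p : nat) (grp : 'I_k -> 'I_p) (l : 'I_k) : nat :=
  #|[set l' : 'I_k | (grp l' == grp l) && (l' <= l)%N]|.

Definition gammaBT (R : realFieldType) (k p : nat) (grp : 'I_k -> 'I_p)
  (G : 'M[R]_k) : R :=
  \big[Num.max/0]_(l : 'I_k) \big[Num.max/0]_(l' : 'I_k |
      rank_in grp l != rank_in grp l') `|G l l'|.

Definition gammaBG (R : realFieldType) (k p : nat) (grp : 'I_k -> 'I_p)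
  (G : 'M[R]_k) : R :=
  \big[Num.max/0]_(l : 'I_k) \big[Num.max/0]_(l' : 'I_k |
      (grp l != grp l') && (rank_in grp l == rank_in grp l')) `|G l l'|.

(* r(I) = #I gamma_BT^2 + #{j : exists t, (j,t) in I} gamma_BG^2 *)
Definition rI (R : realFieldType) (k p : nat) (grp : 'I_k -> 'I_p)
  (G : 'M[R]_k) (I : {set 'I_k}) : R :=
  (#|I|%:R * gammaBT grp G ^+ 2 + #|grp @: I|%:R * gammaBG grp G ^+ 2).

Definition Bvec (R : realFieldType) (k : nat) (G : 'M[R]_k) (alpha : 'I_k -> R)
  (C : {set 'I_k}) (l : 'I_k) : R :=
  \sum_(l' in C | l' != l) G l l' * alpha l'.

From HB Require Import structures.
From mathcomp Require Import all_boot all_order all_algebra.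
From mathcomp Require Import ring lra.
Set Implicit Arguments. Unset Strict Implicit. Unset Printing Implicit Defensive.
Import Order.TTheory GRing.Theory Num.Theory.
Local Open Scope ring_scope.

(* Split B(C)_l according to whether the rank of l' differs from that of l.
   The first part has entries bounded by gamma_BT, hence is at most
   gamma_BT ||alpha||_C,1 in absolute value.  In the second part l' <> l has
   the same rank as l, hence lies in another group (the pair (group, rank)
   determines an index), so its entries are bounded by gamma_BG and it is at
   most gamma_BG S_l, where S_l is the alpha-mass of C on the rank of l.
   Squaring with (x + y)^2 <= 2x^2 + 2y^2 and summing over I, it remains to
   see that sum_(l in I) S_l^2 <= #groups(I) ||alpha||_C,1^2: bound S_l^2 by
   ||alpha||_C,1 S_l and note that the indices of I in one group have distinct
   ranks, so their masses S_l add up to at most ||alpha||_C,1. *)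

Section RankInGroup.
Variables (k p : nat) (grp : 'I_k -> 'I_p).

Lemma rank_in_ltn (a b : 'I_k) :
  grp a = grp b -> (a < b)%N -> (rank_in grp a < rank_in grp b)%N.
Proof.
move=> gab ab; apply: proper_card; rewrite properE; apply/andP; split.
  apply/subsetP => x; rewrite !inE gab => /andP[-> xa] /=.
  exact: leq_trans xa (ltnW ab).
apply/subsetPn; exists b; first by rewrite inE eqxx leqnn.
by rewrite inE gab eqxx /= leqNgt ab.
Qed.

Lemma rank_in_inj (a b : 'I_k) :
  grp a = grp b -> rank_in grp a = rank_in grp b -> a = b.
Proof.
move=> gab rab; case: (ltngtP a b) => [ab|ba|/val_inj //].
- by have := rank_in_ltn gab ab; rewrite rab ltnn.
- by have := rank_in_ltn (esym gab) ba; rewrite rab ltnn.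
Qed.

End RankInGroup.

Section SumBounds.
Variables (R : realDomainType) (I : finType).

Lemma ler_sum_subset (P Q : pred I) (F : I -> R) :
  subpred P Q -> (forall i, Q i -> 0 <= F i) ->
  \sum_(i | P i) F i <= \sum_(i | Q i) F i.
Proof.
move=> PQ F0; rewrite [leRHS](bigID P) /= [X in _ <= X + _](eq_bigl P F).
  by rewrite lerDl sumr_ge0 // => i /andP[/F0].
by move=> i; case: (boolP (P i)) => [/PQ ->|]; rewrite ?andbF.
Qed.

Lemma ler_norm_sum_mul (P Q : pred I) (g a : I -> R) (M : R) :
  subpred P Q -> 0 <= M -> (forall i, P i -> `|g i| <= M) ->
  `|\sum_(i | P i) g i * a i| <= M * \sum_(i | Q i) `|a i|.
Proof.
move=> PQ M0 gM; apply: le_trans (ler_norm_sum _ _ _) _.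
rewrite mulr_sumr; apply: le_trans (ler_sum_subset PQ _); last first.
  by move=> i _; rewrite mulr_ge0.
by apply: ler_sum => i Pi; rewrite normrM ler_wpM2r ?gM.
Qed.

Lemma sum_fibers_le (J : eqType) (f : I -> J) (A Q : pred I) (w : I -> R) :
  {in A &, injective f} -> (forall i, Q i -> 0 <= w i) ->
  \sum_(i | A i) \sum_(i' | Q i' && (f i' == f i)) w i' <= \sum_(i' | Q i') w i'.
Proof.
move=> finj w0; under eq_bigr do rewrite big_mkcondr.
rewrite exchange_big /=; apply: ler_sum => i' Qi'; rewrite -big_mkcondr /=.
case: (pickP [pred i | A i && (f i' == f i)]) => [i0 /andP[Ai0 /eqP fi0]|none].
  rewrite (bigD1 i0) ?Ai0 ?fi0 ?eqxx //= big1 ?addr0 // => i.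
  by case/andP=> /andP[Ai /eqP fi]; rewrite (finj _ _ Ai Ai0 (esym fi)) eqxx.
by rewrite big_pred0 ?w0.
Qed.

Lemma sqrrD_le2 (x y : R) : (x + y) ^+ 2 <= 2 * x ^+ 2 + 2 * y ^+ 2.
Proof. have := sqr_ge0 (x - y); rewrite !expr2; lra. Qed.

Lemma sqr_le_of_norm (x c : R) : `|x| <= c -> x ^+ 2 <= c ^+ 2.
Proof.
move=> xc; rewrite -real_normK ?num_real // ler_sqr ?nnegrE //.
exact: le_trans xc.
Qed.

End SumBounds.

Section GammaBounds.
Variables (R : realFieldType) (k p : nat) (grp : 'I_k -> 'I_p).
Variables (G : 'M[R]_k) (alpha : 'I_k -> R) (C : {set 'I_k}).

Local Notation rank := (rank_in grp).
Local Notation gT := (gammaBT grp G).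
Local Notation gG := (gammaBG grp G).
Local Notation mass := (\sum_(l in C) `|alpha l|).

Lemma gammaBT_ge0 : 0 <= gT.
Proof. exact: bigmax_ge_id. Qed.

Lemma gammaBG_ge0 : 0 <= gG.
Proof. exact: bigmax_ge_id. Qed.

Lemma norm_entry_le_gammaBT l l' : rank l != rank l' -> `|G l l'| <= gT.
Proof. by move=> rll'; apply: le_trans (le_bigmax _ _ l); apply: le_bigmax_cond. Qed.

Lemma norm_entry_le_gammaBG l l' :
  grp l != grp l' -> rank l == rank l' -> `|G l l'| <= gG.
Proof.
move=> gll' rll'; apply: le_trans (le_bigmax _ _ l); apply: le_bigmax_cond.
by rewrite gll' rll'.
Qed.

Definition same_rank_mass (l : 'I_k) : R :=
  \sum_(l' in C | rank l' == rank l) `|alpha l'|.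

Lemma same_rank_mass_ge0 l : 0 <= same_rank_mass l.
Proof. exact: sumr_ge0. Qed.

Lemma same_rank_mass_le l : same_rank_mass l <= mass.
Proof. by apply: ler_sum_subset => // l' /andP[]. Qed.

Lemma Bvec_sqr_le l :
  Bvec G alpha C l ^+ 2 <= 2 * (gT * mass) ^+ 2 + 2 * (gG * same_rank_mass l) ^+ 2.
Proof.
rewrite /Bvec (bigID (fun l' => rank l' != rank l)) /=.
apply: le_trans (sqrrD_le2 _ _) _; apply: lerD; rewrite ler_pM2l ?ltr0n //;
  apply: sqr_le_of_norm; apply: ler_norm_sum_mul.
- by move=> l' /andP[/andP[]].
- exact: gammaBT_ge0.
- by move=> l' /andP[_ rl']; apply: norm_entry_le_gammaBT; rewrite eq_sym.
- by move=> l' /andP[/andP[-> _]]; rewrite negbK.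
- exact: gammaBG_ge0.
- move=> l' /andP[/andP[_ l'l]]; rewrite negbK => /eqP rl'.
  apply: norm_entry_le_gammaBG; rewrite ?rl' //; apply: contra l'l => /eqP gl.
  by rewrite (rank_in_inj (esym gl) rl').
Qed.

Lemma sum_same_rank_mass_sqr_le (I : {set 'I_k}) :
  \sum_(l in I) same_rank_mass l ^+ 2 <= #|grp @: I|%:R * mass ^+ 2.
Proof.
rewrite (partition_big_imset grp) -sum1_card natr_sum mulr_suml.
apply: ler_sum => j _; rewrite mul1r expr2.
apply: le_trans (_ : (\sum_(l in I | grp l == j) same_rank_mass l) * mass <= _).
  rewrite mulr_suml; apply: ler_sum => l _.
  by rewrite expr2 ler_wpM2l ?same_rank_mass_ge0 ?same_rank_mass_le.
rewrite ler_wpM2r ?sumr_ge0 // /same_rank_mass.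
apply: sum_fibers_le => // a b /andP[_ /eqP ga] /andP[_ /eqP gb].
exact: rank_in_inj (etrans ga (esym gb)).
Qed.

End GammaBounds.

Theorem lemma3 (R : realFieldType) (n k p : nat) (grp : 'I_k -> 'I_p)
  (grp_surj : forall j : 'I_p, exists l : 'I_k, grp l = j)
  (X : 'M[R]_(n, k)) (alpha : 'I_k -> R) (I C : {set 'I_k}) :
  let G := X^T *m X in
  \sum_(l in I) (Bvec G alpha C l) ^+ 2
    <= 2 * (\sum_(l in C) `|alpha l|) ^+ 2 * rI grp G I.
Proof.
rewrite /=; set G := X^T *m X; set a := \sum_(l in C) `|alpha l|.
set T := gammaBT grp G; set U := gammaBG grp G.
apply: le_trans (ler_sum _ (fun l _ => Bvec_sqr_le grp G alpha C l)) _.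
rewrite big_split /= sumr_const -mulr_sumr /rI mulrDr.
apply: lerD.
  have -> : 2 * (T * a) ^+ 2 *+ #|I| = 2 * a ^+ 2 * (#|I|%:R * T ^+ 2) by ring.
  exact: lexx.
under eq_bigr do rewrite exprMn.
rewrite -mulr_sumr.
have -> : 2 * a ^+ 2 * (#|grp @: I|%:R * U ^+ 2)
        = 2 * (U ^+ 2 * (#|grp @: I|%:R * a ^+ 2)) by ring.
by rewrite ler_pM2l // ler_wpM2l ?sqr_ge0 ?sum_same_rank_mass_sqr_le.
Qed.
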